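(* Let $\psi_0=1$, $\psi_j(x)=\sqrt2\cos(\pi jx)$ for $j\ge1$, let $\gamma>1/2$, $C>0$, and let $X$ have density $p=1+\sum_{j\ge1}\beta_j\psi_j\in\mathcal P(\gamma,C)$ on $[0,1]$. For $k\ge1$ let $m_k=\lfloor k^{1/(2\gamma+1)}\rfloor$, let $\Sigma_k$ be the covariance matrix of the random vector $(\psi_1(X),\dots,\psi_{m_k}(X))^T$, and let $\lambda_k$ be the largest eigenvalue of $\Sigma_k$. Then $\limsup_{k\to\infty}\lambda_k<\infty$.
   Context: Sobolev class: for $\gamma>1/2$, $C>0$, $\mathcal B(\gamma,C)=\{\beta=(\beta_1,\beta_2,\dots):\sum_{j\ge1}\beta_j^2j^{2\gamma}\le C^2\}$ and $\mathcal P(\gamma,C)=\{p=1+\sum_{j\ge1}\beta_j\psi_j:\beta\in\mathcal B(\gamma,C)\}$ (densities on $[0,1]$). *)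

From Stdlib Require Import Reals Lra Lia ZArith ClassicalEpsilon.
Open Scope R_scope.

Fixpoint sumR (n : nat) (f : nat -> R) : R :=
  match n with O => 0 | S n' => sumR n' f + f n' end.

Definition psi (j : nat) (x : R) : R :=
  match j with O => 1 | _ => sqrt 2 * cos (PI * INR j * x) end.

(* Riemann integral over [0,1] (0 if not Riemann integrable; the value does
   not depend on the chosen integrability witness) *)
Definition Int01 (f : R -> R) : R :=
  match excluded_middle_informative (exists pr : Riemann_integrable f 0 1, True) with
  | left h => RiemannInt (proj1_sig (constructive_indefinite_description _ h))
  | right _ => 0
  end.

Definition Expect (p : R -> R) (g : R -> R) : R := Int01 (fun x => g x * p x).

(* covariance matrix of (psi_1(X), ..., psi_m(X)); indices i, j < m,
   entry (i,j) = Cov(psi_{i+1}(X), psi_{j+1}(X)) *)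
Definition covmat (p : R -> R) (i j : nat) : R :=
  Expect p (fun x => psi (S i) x * psi (S j) x)
  - Expect p (psi (S i)) * Expect p (psi (S j)).

Definition is_eigenvalue (m : nat) (A : nat -> nat -> R) (lam : R) : Prop :=
  exists v : nat -> R,
    (exists i, (i < m)%nat /\ v i <> 0) /\
    forall i, (i < m)%nat -> sumR m (fun j => A i j * v j) = lam * v i.

Definition is_largest_eigenvalue (m : nat) (A : nat -> nat -> R) (lam : R) : Prop :=
  is_eigenvalue m A lam /\ forall mu, is_eigenvalue m A mu -> mu <= lam.

Definition mk (gamma : R) (k : nat) : nat :=
  Z.to_nat (Int_part (Rpower (INR k) (1 / (2 * gamma + 1)))).

From Stdlib Require Import Reals Lra Lia ClassicalEpsilon FunctionalExtensionality.
Open Scope R_scope.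

(* For v in R^m put g_v = sum_i v_i psi_{i+1}.  Then
     v^T Sigma v = Var g_v(X) <= E[g_v(X)^2] = int_0^1 g_v^2 p <= (sup p) |v|^2,
   the last step by orthonormality of the cosine basis (Parseval).  Hence every
   eigenvalue of Sigma is at most sup p, uniformly in m.  It remains to bound p: when gamma > 1/2, AM-GM against the
   convergent series sum j^(-2 gamma) shows sum |beta_j| < oo, so the cosine
   series of p converges uniformly (Weierstrass M-test) to a continuous function
   bounded by 1 + sqrt 2 * sum |beta_j|.  Continuity is also what makes all the
   Riemann integrals above exist. *)

Lemma sumR_ext n f g : (forall i, (i < n)%nat -> f i = g i) -> sumR n f = sumR n g.
Proof.
  induction n as [|n IH]; intros H; simpl; [reflexivity|].
  rewrite IH, H; [reflexivity | lia | intros; apply H; lia].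
Qed.

Lemma sumR_le n f g : (forall i, (i < n)%nat -> f i <= g i) -> sumR n f <= sumR n g.
Proof.
  induction n as [|n IH]; intros H; simpl; [lra|].
  assert (f n <= g n) by (apply H; lia).
  assert (sumR n f <= sumR n g) by (apply IH; intros; apply H; lia). lra.
Qed.

Lemma sumR_plus n f g : sumR n (fun i => f i + g i) = sumR n f + sumR n g.
Proof. induction n as [|n IH]; simpl; [lra|]. rewrite IH. ring. Qed.

Lemma sumR_minus n f g : sumR n (fun i => f i - g i) = sumR n f - sumR n g.
Proof. induction n as [|n IH]; simpl; [lra|]. rewrite IH. ring. Qed.

Lemma sumR_scal n c f : sumR n (fun i => c * f i) = c * sumR n f.
Proof. induction n as [|n IH]; simpl; [lra|]. rewrite IH. ring. Qed.

Lemma sumR_mulr n f c : sumR n f * c = sumR n (fun i => f i * c).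
Proof. induction n as [|n IH]; simpl; [lra|]. rewrite <- IH. ring. Qed.

Lemma sumR_zero n : sumR n (fun _ => 0) = 0.
Proof. induction n as [|n IH]; simpl; [reflexivity|]. rewrite IH. ring. Qed.

Lemma sumR_delta n v i : (i < n)%nat ->
  sumR n (fun j => v j * (if Nat.eqb i j then 1 else 0)) = v i.
Proof.
  induction n as [|n IH]; intros Hi; simpl; [lia|].
  destruct (Nat.eq_dec i n) as [->|Hin].
  - rewrite Nat.eqb_refl, (sumR_ext n _ (fun _ => 0)), sumR_zero; [ring|].
    intros j Hj. replace (Nat.eqb n j) with false by (symmetry; apply Nat.eqb_neq; lia). ring.
  - replace (Nat.eqb i n) with false by (symmetry; apply Nat.eqb_neq; exact Hin).
    rewrite IH by lia. ring.
Qed.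

Lemma Int01_pr f (pr : Riemann_integrable f 0 1) : Int01 f = RiemannInt pr.
Proof.
  unfold Int01. destruct excluded_middle_informative as [h|h].
  - apply RiemannInt_P5.
  - exfalso. apply h. exists pr. exact I.
Qed.

Lemma continuity_integrable f : continuity f -> Riemann_integrable f 0 1.
Proof. intros Hf. apply continuity_implies_RiemannInt; [lra|]. intros; apply Hf. Qed.

Lemma integrable_ext f g a b : a <= b -> Riemann_integrable f a b ->
  (forall x, a <= x <= b -> f x = g x) -> Riemann_integrable g a b.
Proof.
  intros Hab pr Hfg eps. destruct (pr eps) as [phi [psi' [Hbound Hpsi]]].
  exists phi, psi'. split; [|exact Hpsi].
  intros t Ht. rewrite Rmin_left, Rmax_right in Ht by exact Hab.
  rewrite <- (Hfg t Ht). apply Hbound. rewrite Rmin_left, Rmax_right; auto.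
Qed.

(* [Int01] only depends on the values on [0,1], integrable or not; this is what
   lets a density be replaced by its continuous representative. *)
Lemma Int01_ext f g : (forall x, 0 <= x <= 1 -> f x = g x) -> Int01 f = Int01 g.
Proof.
  intros Hfg.
  assert (Hgf : forall x, 0 <= x <= 1 -> g x = f x) by (intros; symmetry; auto).
  destruct (excluded_middle_informative (exists pr : Riemann_integrable f 0 1, True))
    as [[pr _]|Hnot].
  - rewrite (Int01_pr f pr), (Int01_pr g (integrable_ext f g 0 1 ltac:(lra) pr Hfg)).
    apply RiemannInt_P18; [lra|]. intros; apply Hfg; lra.
  - unfold Int01.
    destruct excluded_middle_informative as [h|_]; [contradiction|].
    destruct excluded_middle_informative as [Hg_int|_]; [|reflexivity].
    exfalso. destruct Hg_int as [pr _]. apply Hnot. exists (integrable_ext g f 0 1 ltac:(lra) pr Hgf). exact I.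
Qed.

Lemma Int01_lin f g l : continuity f -> continuity g ->
  Int01 (fun x => f x + l * g x) = Int01 f + l * Int01 g.
Proof.
  intros Hf Hg.
  assert (Hc : continuity (fun x => f x + l * g x)).
  { apply continuity_plus; [exact Hf|]. apply continuity_scal. exact Hg. }
  rewrite (Int01_pr _ (continuity_integrable _ Hc)),
    (Int01_pr _ (continuity_integrable _ Hf)), (Int01_pr _ (continuity_integrable _ Hg)).
  apply RiemannInt_P13.
Qed.

Lemma continuity_constant c : continuity (fun _ => c).
Proof. apply continuity_const. intros x y. reflexivity. Qed.

Lemma Int01_zero : Int01 (fun _ => 0) = 0.
Proof.
  change (Int01 (fct_cte 0) = 0).
  rewrite (Int01_pr (fct_cte 0) (continuity_integrable _ (continuity_constant 0))), RiemannInt_P15.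
  ring.
Qed.

Lemma Int01_scal f l : continuity f -> Int01 (fun x => l * f x) = l * Int01 f.
Proof.
  intros Hf. pose proof (Int01_lin (fun _ => 0) f l (continuity_constant 0) Hf) as E.
  rewrite Int01_zero, Rplus_0_l in E. rewrite <- E. apply Int01_ext. intros; ring.
Qed.

Lemma continuity_sumR n (c : nat -> R) (f : nat -> R -> R) :
  (forall i, continuity (f i)) -> continuity (fun x => sumR n (fun i => c i * f i x)).
Proof.
  intros Hf. induction n as [|n IH]; simpl; [exact (continuity_constant 0)|].
  apply continuity_plus; [exact IH|]. apply continuity_scal. apply Hf.
Qed.

Lemma Int01_sumR n (c : nat -> R) (f : nat -> R -> R) :
  (forall i, continuity (f i)) ->
  Int01 (fun x => sumR n (fun i => c i * f i x)) = sumR n (fun i => c i * Int01 (f i)).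
Proof.
  intros Hf. induction n as [|n IH]; simpl; [exact Int01_zero|].
  rewrite <- IH. apply (Int01_lin (fun x => sumR n (fun i => c i * f i x))).
  - apply continuity_sumR. exact Hf.
  - apply Hf.
Qed.

Lemma Int01_le f g : continuity f -> continuity g ->
  (forall x, 0 <= x <= 1 -> f x <= g x) -> Int01 f <= Int01 g.
Proof.
  intros Hf Hg Hfg.
  rewrite (Int01_pr _ (continuity_integrable _ Hf)), (Int01_pr _ (continuity_integrable _ Hg)).
  apply RiemannInt_P19; [lra|]. intros; apply Hfg; lra.
Qed.

Lemma Int01_FTC (F f : R -> R) :
  (forall x, derivable_pt_lim F x (f x)) -> continuity f -> Int01 f = F 1 - F 0.
Proof.
  intros HF Hf.
  pose (dF := (fun x => exist _ (f x) (HF x)) : derivable F).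
  assert (HdF : continuity (derive F dF)) by exact Hf.
  pose (G := @mkC1 F dF HdF).
  pose proof (@RiemannInt_P33 G 0 1 (RiemannInt_P32 G 0 1) ltac:(lra)) as H.
  rewrite <- (Int01_pr _ (RiemannInt_P32 G 0 1)) in H. exact H.
Qed.

Lemma continuity_cos_lin c : continuity (fun x => cos (c * x)).
Proof.
  intros x. apply continuity_pt_comp with (f1 := fun x => c * x).
  - apply continuity_pt_scal. apply derivable_continuous_pt, derivable_pt_id.
  - apply continuity_cos.
Qed.

Lemma Int01_cos (z : Z) : Int01 (fun x => cos (PI * IZR z * x)) = if Z.eqb z 0 then 1 else 0.
Proof.
  destruct (Z.eqb_spec z 0) as [->|Hz].
  - rewrite (Int01_ext _ (fun _ => 1))
      by (intros; rewrite Rmult_0_r, Rmult_0_l; apply cos_0).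
    rewrite (Int01_FTC (fun x => x) (fun _ => 1)); [ring| |].
    + intros; apply derivable_pt_lim_id.
    + apply continuity_constant.
  - set (c := PI * IZR z).
    assert (Hc : c <> 0).
    { apply Rmult_integral_contrapositive. split.
      - pose proof PI_RGT_0. lra.
      - apply not_0_IZR. exact Hz. }
    rewrite (Int01_FTC (fun x => / c * sin (c * x)) (fun x => cos (c * x))).
    + rewrite Rmult_1_r, Rmult_0_r, sin_0, sin_eq_0_1 by (exists z; unfold c; ring). ring.
    + intros x. replace (cos (c * x)) with (/ c * (cos (c * x) * c)) by (field; exact Hc).
      apply derivable_pt_lim_scal, (derivable_pt_lim_comp (fun x => c * x) sin).
      * pose proof (derivable_pt_lim_scal id c x 1 (derivable_pt_lim_id x)) as K.
        rewrite Rmult_1_r in K. exact K.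
      * apply derivable_pt_lim_sin.
    + apply continuity_cos_lin.
Qed.

Lemma continuity_psi j : continuity (psi (S j)).
Proof.
  change (continuity (fun x => sqrt 2 * cos (PI * INR (S j) * x))).
  apply continuity_scal, continuity_cos_lin.
Qed.

Lemma psi_bound j x : Rabs (psi (S j) x) <= sqrt 2.
Proof.
  change (Rabs (sqrt 2 * cos (PI * INR (S j) * x)) <= sqrt 2).
  rewrite Rabs_mult, Rabs_right by (apply Rle_ge, sqrt_pos).
  pose proof (COS_bound (PI * INR (S j) * x)). pose proof (sqrt_pos 2).
  assert (Rabs (cos (PI * INR (S j) * x)) <= 1) by (apply Rabs_le; lra). nra.
Qed.

Lemma psi_product i j x :
  psi (S i) x * psi (S j) x =
  cos (PI * IZR (Z.of_nat (S i) - Z.of_nat (S j)) * x)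
  + cos (PI * IZR (Z.of_nat (S i) + Z.of_nat (S j)) * x).
Proof.
  change (sqrt 2 * cos (PI * INR (S i) * x) * (sqrt 2 * cos (PI * INR (S j) * x)) =
    cos (PI * IZR (Z.of_nat (S i) - Z.of_nat (S j)) * x)
    + cos (PI * IZR (Z.of_nat (S i) + Z.of_nat (S j)) * x)).
  rewrite minus_IZR, plus_IZR, <- !INR_IZR_INZ.
  replace (PI * (INR (S i) - INR (S j)) * x)
    with (PI * INR (S i) * x - PI * INR (S j) * x) by ring.
  replace (PI * (INR (S i) + INR (S j)) * x)
    with (PI * INR (S i) * x + PI * INR (S j) * x) by ring.
  rewrite cos_minus, cos_plus.
  replace (sqrt 2 * cos (PI * INR (S i) * x) * (sqrt 2 * cos (PI * INR (S j) * x)))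
    with ((sqrt 2 * sqrt 2) * (cos (PI * INR (S i) * x) * cos (PI * INR (S j) * x))) by ring.
  rewrite sqrt_sqrt by lra. ring.
Qed.

Lemma psi_orthonormal i j :
  Int01 (fun x => psi (S i) x * psi (S j) x) = if Nat.eqb i j then 1 else 0.
Proof.
  rewrite (Int01_ext _ (fun x => cos (PI * IZR (Z.of_nat (S i) - Z.of_nat (S j)) * x)
      + 1 * cos (PI * IZR (Z.of_nat (S i) + Z.of_nat (S j)) * x)))
    by (intros; rewrite psi_product; ring).
  rewrite Int01_lin by apply continuity_cos_lin. rewrite !Int01_cos.
  replace (Z.eqb (Z.of_nat (S i) + Z.of_nat (S j)) 0) with false
    by (symmetry; apply Z.eqb_neq; lia).
  destruct (Nat.eqb_spec i j) as [->|Hij].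
  - rewrite Z.sub_diag. simpl. ring.
  - replace (Z.eqb (Z.of_nat (S i) - Z.of_nat (S j)) 0) with false
      by (symmetry; apply Z.eqb_neq; lia). ring.
Qed.

Lemma zeta_term_le s x : 1 < s -> 1 <= x ->
  Rpower (x + 1) (- s) <= (Rpower x (1 - s) - Rpower (x + 1) (1 - s)) / (s - 1).
Proof.
  intros Hs Hx.
  destruct (MVT_cor2 (fun y => Rpower y (1 - s)) (fun y => (1 - s) * Rpower y (1 - s - 1))
              x (x + 1)) as [c [Hmvt Hc]]; [lra| |].
  - intros c Hc. apply derivable_pt_lim_power. lra.
  - replace (1 - s - 1) with (- s) in Hmvt by ring.
    replace (x + 1 - x) with 1 in Hmvt by ring.
    replace (Rpower x (1 - s) - Rpower (x + 1) (1 - s)) with ((s - 1) * Rpower c (- s))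
      by lra.
    replace ((s - 1) * Rpower c (- s) / (s - 1)) with (Rpower c (- s)) by (field; lra).
    rewrite !Rpower_Ropp. apply Rinv_le_contravar; [apply exp_pos|].
    apply Rle_Rpower_l; lra.
Qed.

Lemma zeta_partial_le s n : 1 < s -> sumR n (fun j => Rpower (INR (S j)) (- s)) <= 1 + / (s - 1).
Proof.
  intros Hs.
  assert (Hinv : 0 < / (s - 1)) by (apply Rinv_0_lt_compat; lra).
  assert (Htele : forall n, sumR (S n) (fun j => Rpower (INR (S j)) (- s))
             <= 1 + (1 - Rpower (INR (S n)) (1 - s)) / (s - 1)).
  { induction n0 as [|n0 IH].
    - simpl. unfold Rpower. rewrite ln_1, !Rmult_0_r, exp_0. unfold Rdiv. lra.
    - change (sumR (S (S n0)) (fun j => Rpower (INR (S j)) (- s))) with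
        (sumR (S n0) (fun j => Rpower (INR (S j)) (- s)) + Rpower (INR (S (S n0))) (- s)).
      assert (H1 : 1 <= INR (S n0)) by (rewrite S_INR; pose proof (pos_INR n0); lra).
      pose proof (zeta_term_le s (INR (S n0)) Hs H1) as Hterm.
      rewrite <- S_INR in Hterm. unfold Rdiv in *. lra. }
  destruct n as [|n]; [simpl; lra|].
  specialize (Htele n).
  assert (Hpos : 0 < Rpower (INR (S n)) (1 - s) * / (s - 1))
    by (apply Rmult_lt_0_compat; [apply exp_pos | exact Hinv]).
  unfold Rdiv in Htele. lra.
Qed.

Lemma abs_le_amgm b a : 0 < a -> Rabs b <= (b ^ 2 * a + / a) / 2.
Proof.
  intros Ha. set (t := Rabs b).
  assert (Hb2 : b ^ 2 = t * t) by (unfold t; rewrite <- pow2_abs; ring).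
  assert (Hsq : 0 <= (a * t - 1) * (a * t - 1) / a)
    by (apply Rmult_le_pos; [apply Rle_0_sqr | left; apply Rinv_0_lt_compat; exact Ha]).
  replace ((a * t - 1) * (a * t - 1) / a) with (t * t * a + / a - 2 * t) in Hsq
    by (field; lra).
  rewrite Hb2. lra.
Qed.

(* If sum beta_j^2 j^(2 gamma) <= C^2 and gamma > 1/2, then the partial sums of
   sum |beta_j| are bounded, by AM-GM against the convergent series sum j^(-2 gamma). *)
Lemma sobolev_l1_bound gamma C beta : 1 / 2 < gamma ->
  (forall n, sumR n (fun j => (beta (S j)) ^ 2 * Rpower (INR (S j)) (2 * gamma)) <= C ^ 2) ->
  forall n, sumR n (fun j => Rabs (beta (S j))) <= (C ^ 2 + (1 + / (2 * gamma - 1))) / 2.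
Proof.
  intros Hgamma Hsob n.
  apply Rle_trans with (sumR n (fun j => / 2 * ((beta (S j)) ^ 2 * Rpower (INR (S j)) (2 * gamma)
                                         + Rpower (INR (S j)) (- (2 * gamma))))).
  - apply sumR_le. intros j _. rewrite Rpower_Ropp, Rmult_comm.
    apply abs_le_amgm, exp_pos.
  - rewrite sumR_scal, sumR_plus.
    pose proof (Hsob n). pose proof (zeta_partial_le (2 * gamma) n ltac:(lra)). lra.
Qed.

(* This is the Weierstrass M-test of the standard library ([CVN_R], [SFL]),
   restated for the sums [sumR]. *)

Lemma sumR_sum_f_R0 n g : sumR (S n) g = sum_f_R0 g n.
Proof. induction n as [|n IH]; simpl; [ring|]. rewrite <- IH. reflexivity. Qed.

Lemma Un_cv_sumR (g : nat -> R) l :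
  Un_cv (fun N => sum_f_R0 g N) l -> Un_cv (fun n => sumR n g) l.
Proof.
  intros Hcv eps Heps. destruct (Hcv eps Heps) as [N HN].
  exists (S N). intros n Hn. destruct n as [|n]; [lia|].
  rewrite sumR_sum_f_R0. apply HN. lia.
Qed.

Lemma Un_cv_const l : Un_cv (fun _ => l) l.
Proof. intros eps Heps. exists 0%nat. intros. unfold Rdist. rewrite Rminus_diag, Rabs_R0. exact Heps. Qed.

Lemma M_test (f : nat -> R -> R) (c : nat -> R) (B A : R) :
  (forall j, continuity (f j)) ->
  (forall j x, Rabs (f j x) <= B) ->
  (forall n, sumR n (fun j => Rabs (c j)) <= A) ->
  exists r : R -> R, continuity r /\
    (forall x, Un_cv (fun n => sumR n (fun j => c j * f j x)) (r x)) /\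
    (forall x, Rabs (r x) <= B * A).
Proof.
  intros Hcont Hbound Hsum.
  set (fn := fun j x => c j * f j x).
  set (An := fun j => B * Rabs (c j)).
  assert (HB : 0 <= B) by (pose proof (Rabs_pos (f 0%nat 0)); pose proof (Hbound 0%nat 0); lra).
  assert (HAn : forall N, sum_f_R0 (fun k => Rabs (An k)) N = B * sumR (S N) (fun j => Rabs (c j))).
  { intros N. rewrite <- sumR_sum_f_R0, <- sumR_scal. apply sumR_ext. intros j _.
    unfold An. rewrite Rabs_mult, Rabs_Rabsolu, (Rabs_right B) by lra. reflexivity. }
  assert (Hmaj : forall N, sum_f_R0 (fun k => Rabs (An k)) N <= B * A).
  { intros N. rewrite HAn. apply Rmult_le_compat_l; [exact HB | apply Hsum]. }
  assert (Hgrow : Un_growing (fun N => sum_f_R0 (fun k => Rabs (An k)) N)).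
  { intros N. simpl. pose proof (Rabs_pos (An (S N))). lra. }
  destruct (growing_cv _ Hgrow) as [lA HlA]; [exists (B * A); intros y [N ->]; apply Hmaj|].
  assert (HlA_le : lA <= B * A)
    by (exact (@Rle_cv_lim _ (fun _ => B * A) _ _ Hmaj HlA (Un_cv_const (B * A)))).
  assert (Hfn_le : forall n y, Rabs (fn n y) <= Rabs (An n)).
  { intros n y. unfold fn, An. rewrite Rabs_mult, (Rmult_comm B), Rabs_mult, Rabs_Rabsolu.
    apply Rmult_le_compat_l; [apply Rabs_pos|]. eapply Rle_trans; [apply Hbound|apply Rle_abs]. }
  assert (Hcvn : CVN_R fn).
  { intros rad. exists An, lA. split; [exact HlA|].
    intros n y _. eapply Rle_trans; [apply Hfn_le|]. unfold An.
    rewrite Rabs_mult, Rabs_Rabsolu, (Rabs_right B) by lra. apply Rle_refl. }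
  set (cv := CVN_R_CVS fn Hcvn).
  assert (Hlim : forall x, Un_cv (fun N => SP fn N x) (SFL fn cv x))
    by (intros x; unfold SFL; destruct (cv x) as [l Hl]; exact Hl).
  exists (SFL fn cv). split; [|split].
  - apply SFL_continuity; [exact Hcvn|]. intros n. apply continuity_scal, Hcont.
  - intros x. apply Un_cv_sumR, Hlim.
  - intros x. apply Rle_trans with lA; [|exact HlA_le].
    exact (sum_cv_maj (fun k => Rabs (An k)) fn x _ _ (Hlim x) HlA (fun n => Hfn_le n x)).
Qed.

Definition quadform (m : nat) (A : nat -> nat -> R) (v : nat -> R) : R :=
  sumR m (fun i => v i * sumR m (fun j => A i j * v j)).

Definition sqnorm (m : nat) (v : nat -> R) : R := sumR m (fun i => v i * v i).

Lemma sqnorm_pos m v i : (i < m)%nat -> v i <> 0 -> 0 < sqnorm m v.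
Proof.
  unfold sqnorm. induction m as [|m IH]; intros Hi Hv; simpl; [lia|].
  destruct (Nat.eq_dec i m) as [->|Him].
  - assert (0 <= sumR m (fun j => v j * v j))
      by (rewrite <- (sumR_zero m); apply sumR_le; intros; apply Rle_0_sqr).
    assert (0 < v m * v m) by (apply Rsqr_pos_lt; exact Hv). lra.
  - assert (0 < sumR m (fun j => v j * v j)) by (apply IH; [lia | exact Hv]).
    pose proof (Rle_0_sqr (v m)). unfold Rsqr in *. lra.
Qed.

Lemma eigenvalue_le_of_quadform m A M lam :
  (forall v, quadform m A v <= M * sqnorm m v) -> is_eigenvalue m A lam -> lam <= M.
Proof.
  intros Hquad [v [[i [Hi Hvi]] Heig]].
  assert (Hnorm := sqnorm_pos m v i Hi Hvi).
  assert (Hq : quadform m A v = lam * sqnorm m v).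
  { unfold quadform, sqnorm. rewrite <- sumR_scal. apply sumR_ext.
    intros j Hj. rewrite Heig by exact Hj. ring. }
  specialize (Hquad v). rewrite Hq in Hquad.
  apply Rmult_le_reg_r with (sqnorm m v); [exact Hnorm | exact Hquad].
Qed.

Definition trig_poly (m : nat) (v : nat -> R) (x : R) : R := sumR m (fun i => v i * psi (S i) x).

Lemma continuity_trig_poly m v : continuity (trig_poly m v).
Proof. apply (continuity_sumR m v (fun i => psi (S i))). intros; apply continuity_psi. Qed.

Lemma Int01_trig_poly_mul m v h : continuity h ->
  Int01 (fun x => trig_poly m v x * h x) = sumR m (fun i => v i * Int01 (fun x => psi (S i) x * h x)).
Proof.
  intros Hh.
  rewrite (Int01_ext _ (fun x => sumR m (fun i => v i * (fun i x => psi (S i) x * h x) i x)))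
    by (intros x _; unfold trig_poly; rewrite sumR_mulr; apply sumR_ext; intros; ring).
  apply Int01_sumR. intros i. apply continuity_mult; [apply continuity_psi | exact Hh].
Qed.

Lemma trig_poly_parseval m v : Int01 (fun x => trig_poly m v x * trig_poly m v x) = sqnorm m v.
Proof.
  rewrite Int01_trig_poly_mul by apply continuity_trig_poly.
  apply sumR_ext. intros i Hi. f_equal.
  rewrite (Int01_ext _ (fun x => trig_poly m v x * psi (S i) x))
    by (intros; apply Rmult_comm).
  rewrite Int01_trig_poly_mul by apply continuity_psi.
  rewrite (sumR_ext m _ (fun j => v j * (if Nat.eqb i j then 1 else 0))).
  - apply sumR_delta. exact Hi.
  - intros j _. rewrite <- psi_orthonormal.
    f_equal. apply Int01_ext. intros; apply Rmult_comm.
Qed.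

Lemma covmat_quadform q m v : continuity q ->
  quadform m (covmat q) v =
  Int01 (fun x => trig_poly m v x * (trig_poly m v x * q x))
  - Int01 (fun x => trig_poly m v x * q x) * Int01 (fun x => trig_poly m v x * q x).
Proof.
  intros Hq. set (G := Int01 (fun x => trig_poly m v x * q x)).
  assert (Hpsi_q : forall i, continuity (fun x => psi (S i) x * q x))
    by (intros; apply continuity_mult; [apply continuity_psi | exact Hq]).
  assert (HG : G = sumR m (fun j => v j * Expect q (psi (S j))))
    by (apply Int01_trig_poly_mul; exact Hq).
  assert (Hrow : forall i, sumR m (fun j => covmat q i j * v j) =
    Int01 (fun x => trig_poly m v x * (psi (S i) x * q x)) - Expect q (psi (S i)) * G).
  { intros i. rewrite Int01_trig_poly_mul by apply Hpsi_q. unfold covmat.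
    rewrite HG, <- sumR_scal, <- sumR_minus. apply sumR_ext. intros j _.
    replace (Expect q (fun x => psi (S i) x * psi (S j) x))
      with (Int01 (fun x => psi (S j) x * (psi (S i) x * q x)))
      by (apply Int01_ext; intros; ring).
    ring. }
  unfold quadform.
  rewrite (sumR_ext m _ (fun i => v i * Int01 (fun x => psi (S i) x * (trig_poly m v x * q x))
      - G * (v i * Expect q (psi (S i))))).
  - rewrite sumR_minus, sumR_scal, <- HG, <- Int01_trig_poly_mul; [reflexivity|].
    apply continuity_mult; [apply continuity_trig_poly | exact Hq].
  - intros i _. rewrite Hrow.
    replace (Int01 (fun x => trig_poly m v x * (psi (S i) x * q x)))
      with (Int01 (fun x => psi (S i) x * (trig_poly m v x * q x)))
      by (apply Int01_ext; intros; ring).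
    ring.
Qed.

Lemma covmat_quadform_le q M m v : continuity q -> (forall x, 0 <= x <= 1 -> q x <= M) ->
  quadform m (covmat q) v <= M * sqnorm m v.
Proof.
  intros Hq HqM. rewrite covmat_quadform by exact Hq.
  set (g := trig_poly m v).
  assert (Hg : continuity g) by apply continuity_trig_poly.
  assert (Hmean_sq : 0 <= Int01 (fun x => g x * q x) * Int01 (fun x => g x * q x))
    by apply Rle_0_sqr.
  assert (Hsecond : Int01 (fun x => g x * (g x * q x)) <= Int01 (fun x => M * (g x * g x))).
  { apply Int01_le.
    - apply continuity_mult; [exact Hg | apply continuity_mult; [exact Hg | exact Hq]].
    - apply continuity_scal, continuity_mult; exact Hg.
    - intros x Hx. pose proof (HqM x Hx). pose proof (Rle_0_sqr (g x)). unfold Rsqr in *. nra. }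
  assert (Hparseval : Int01 (fun x => g x * g x) = sqnorm m v) by apply trig_poly_parseval.
  rewrite Int01_scal, Hparseval in Hsecond by (apply continuity_mult; exact Hg).
  lra.
Qed.

Lemma covmat_ext p q : (forall x, 0 <= x <= 1 -> p x = q x) -> covmat p = covmat q.
Proof.
  intros Hpq. extensionality i. extensionality j. unfold covmat, Expect.
  rewrite !(Int01_ext (fun x => _ * p x) (fun x => _ * q x)) by (intros x Hx; rewrite Hpq; auto).
  reflexivity.
Qed.

Theorem mainTheorem14 (gamma C : R) (beta : nat -> R) (p : R -> R)
  (hgamma : 1 / 2 < gamma) (hC : 0 < C)
  (hSob : forall n : nat,
      sumR n (fun j => (beta (S j))^2 * Rpower (INR (S j)) (2 * gamma)) <= C^2)
  (hp : forall x, 0 <= x <= 1 ->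
      Un_cv (fun n => 1 + sumR n (fun j => beta (S j) * psi (S j) x)) (p x))
  (hpos : forall x, 0 <= x <= 1 -> 0 <= p x) :
  exists M : R, exists K : nat, forall k : nat, (K <= k)%nat ->
    forall lam, is_largest_eigenvalue (mk gamma k) (covmat p) lam -> lam <= M.
Proof.
  set (A := (C ^ 2 + (1 + / (2 * gamma - 1))) / 2).
  destruct (M_test (fun j => psi (S j)) (fun j => beta (S j)) (sqrt 2) A
              continuity_psi psi_bound (sobolev_l1_bound gamma C beta hgamma hSob))
    as [r [Hr_cont [Hr_lim Hr_bound]]].
  set (q := fun x => 1 + r x).
  assert (Hpq : forall x, 0 <= x <= 1 -> p x = q x)
    by (intros x Hx; exact (UL_sequence _ _ _ (hp x Hx) (CV_plus _ _ _ _ (Un_cv_const 1) (Hr_lim x)))).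
  assert (Hq_cont : continuity q)
    by (apply continuity_plus; [apply continuity_constant | exact Hr_cont]).
  assert (Hq_le : forall x, 0 <= x <= 1 -> q x <= 1 + sqrt 2 * A)
    by (intros x _; pose proof (Rle_abs (r x)); pose proof (Hr_bound x); unfold q; lra).
  exists (1 + sqrt 2 * A), 0%nat. intros k _ lam [Heig _].
  rewrite (covmat_ext p q Hpq) in Heig.
  apply (eigenvalue_le_of_quadform _ _ _ _ (fun v => covmat_quadform_le q _ _ v Hq_cont Hq_le) Heig).
Qed.
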